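(* Let $(a_k)_{k\ge1}$ be an unbounded, monotonically nondecreasing sequence of positive numbers, let $A=\{a_k:k\in\mathbb N\}\subset\mathbb{R}$, and let $\mathcal L'=(\mu_k)_{k\ge1}$ with $\mu_k=a_k^{-1}-a_{k+1}^{-1}$. Then $\mathcal L'$ is monotone (i.e. $\mu_{k+1}\le\mu_k$ for all $k\ge1$) if and only if for each $k\ge1$, $$\frac{a_{k+1}}{a_k}+\frac{a_{k+1}}{a_{k+2}}\ge2.$$ Furthermore, $\overline{\dim}_BA=\overline{\dim}_B\mathcal L'$.
   Context: For a nonempty bounded $B\subset\mathbb{R}^n$, with $B_\varepsilon$ its $\varepsilon$-neighbourhood and $|B_\varepsilon|$ its Lebesgue measure, $\overline{\dim}_BB=\inf\{s\ge0:\limsup_{\varepsilon\to0}|B_\varepsilon|/\varepsilon^{n-s}=0\}$. For a (possibly unbounded) set $A\subset\mathbb{R}^n$ with $0\notin\overline A$, $\overline{\dim}_BA:=\overline{\dim}_B\Phi(A)$ where $\Phi(x)=x/|x|^2$ (so here $\Phi(A)=\{a_k^{-1}:k\in\mathbb N\}$). For a sequence $\mathcal L'=(\mu_j)$ of positive numbers with $\sum_j\mu_j<\infty$, $\overline{\dim}_B\mathcal L':=\inf\{\gamma>0:\sum_{j=1}^\infty\mu_j^{\gamma}<\infty\}$. *)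

From HB Require Import structures.
From mathcomp Require Import all_boot all_order all_algebra.
From mathcomp Require Import all_classical all_reals all_analysis.
Set Implicit Arguments. Unset Strict Implicit. Unset Printing Implicit Defensive.
Import Order.TTheory GRing.Theory Num.Theory.
Import numFieldNormedType.Exports.
Local Open Scope classical_set_scope.
Local Open Scope ring_scope.

(* ambient dimension n = 1 (subsets of R) *)

Definition eps_nbhd {R : realType} (B : set R) (e : R) : set R :=
  [set x | exists2 b, B b & `|x - b| < e].

Definition limsup0 {R : realType} (f : R -> \bar R) : \bar R :=
  ereal_inf [set ereal_sup [set f e | e in [set e | 0 < e < d]] | d in [set d : R | 0 < d]].

Definition upper_box_dim {R : realType} (B : set R) : \bar R :=
  ereal_inf [set s%:E | s in [set s : R | 0 <= s /\
     limsup0 (fun e => (lebesgue_measure (eps_nbhd B e) * ((e `^ (1 - s))^-1)%:E)%E) = 0%E]].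

Definition Phi {R : realType} (x : R) : R := x / `|x| ^+ 2.

(* upper box dimension of a (possibly unbounded) A with 0 not in closure A *)
Definition upper_box_dim_inv {R : realType} (A : set R) : \bar R :=
  upper_box_dim (Phi @` A).

(* upper box dimension of a summable sequence of positive numbers (indexed from 0) *)
Definition seq_box_dim {R : realType} (mu : nat -> R) : \bar R :=
  ereal_inf [set g%:E | g in [set g : R | 0 < g /\
     (\sum_(0 <= j <oo) ((mu j) `^ g)%:E < +oo)%E]].

From HB Require Import structures.
From mathcomp Require Import all_boot all_order all_algebra.
From mathcomp Require Import all_classical all_reals all_analysis.
From mathcomp Require Import ring lra.
Import Order.TTheory GRing.Theory Num.Theory.
Import numFieldNormedType.Exports.
Local Open Scope classical_set_scope.
Local Open Scope ring_scope.

(* Put b_k := 1 / a_k: then Phi(A) = {b_k}, a sequence decreasing to 0, and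
   mu_k = b_k - b_(k+1) are its gaps.  The e-neighbourhood B_e of {b_k}
   contains the disjoint intervals [b_(k+1), b_(k+1) + min(mu_k, e)) and is
   covered by two intervals of length e (at 0 and at b_0) together with, for
   each k, two intervals of length min(mu_k, e) at the ends of [b_(k+1), b_k].
   So |B_e| and sum_k min(mu_k, e) agree up to O(e) and a factor 2.
   If sum_k mu_k^g < oo, then min(mu, e) <= e^(1-g) mu^g gives
   |B_e| = O(e^(1-g)).  Conversely, if sum_k min(mu_k, e) = O(e^(1-s)), sorting
   the mu_k by dyadic scales c 2^-m gives sum_k mu_k^g < oo for every g > s.
   The monotonicity criterion is the identity (y/x + y/z) / y = 1/x + 1/z. *)

Section min_bounds.
Context {R : realDomainType}.
Implicit Types x y : R.

Lemma ge_min_l x y : Num.min x y <= x. Proof. by rewrite ge_min lexx. Qed.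
Lemma ge_min_r x y : Num.min x y <= y. Proof. by rewrite ge_min lexx orbT. Qed.

End min_bounds.

Section powR_facts.
Variable R : realType.
Implicit Types x y g r : R.

Lemma powR_exprn x r m : 0 <= x -> (x ^+ m) `^ r = (x `^ r) ^+ m.
Proof. by move=> x0; rewrite -!powR_mulrn ?powR_ge0 // -!powRrM mulrC. Qed.

Lemma powR_lt1 x r : 0 <= x < 1 -> 0 < r -> x `^ r < 1.
Proof.
move=> /andP[x0 x1] r0; apply: (@lt_le_trans _ _ (1 `^ r)); last by rewrite powR1.
by apply: gt0_ltr_powR; rewrite ?nnegrE.
Qed.

Lemma ge_min_powR x y g : 0 <= x -> 0 < y -> 0 < g <= 1 ->
  Num.min x y <= y `^ (1 - g) * x `^ g.
Proof.
move=> x0 y0 /andP[g0 g1].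
have powR_split z : 0 <= z -> z `^ (1 - g) * z `^ g = z.
  by move=> z0; rewrite -powRD ?subrK ?powRr1 ?oner_eq0.
have [xy|yx] := leP x y.
  rewrite -[leLHS](powR_split x x0) ler_wpM2r ?powR_ge0 //.
  by apply: ge0_ler_powR; rewrite ?nnegrE ?subr_ge0 ?(ltW y0).
rewrite -[leLHS](powR_split y (ltW y0)) ler_wpM2l ?powR_ge0 //.
by apply: ge0_ler_powR; rewrite ?nnegrE ?(ltW g0) ?(ltW yx) ?(ltW y0).
Qed.

End powR_facts.

Section limsup0.
Variable R : realType.
Implicit Types f : R -> \bar R.

Lemma limsup0_lt f eps : limsup0 f = 0%E -> 0 < eps ->
  exists2 d, 0 < d & forall e, 0 < e < d -> (f e < eps%:E)%E.
Proof.
move=> f0 eps0; have : (limsup0 f < eps%:E)%E by rewrite f0 lte_fin.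
case/ereal_inf_lt => _ [d d0 <-] fd; exists d => // e de.
by apply: le_lt_trans fd; apply: ereal_sup_ubound; exists e.
Qed.

Lemma limsup0_eq0 f : (forall e, 0 < e -> (0 <= f e)%E) ->
  (forall eps, 0 < eps ->
    exists2 d, 0 < d & forall e, 0 < e < d -> (f e <= eps%:E)%E) ->
  limsup0 f = 0%E.
Proof.
move=> f_ge0 f_small; apply/eqP; rewrite eq_le; apply/andP; split.
  apply/lee_addgt0Pr => eps eps0; rewrite add0e.
  have [d d0 fd] := f_small eps eps0.
  apply: (@le_trans _ _ (ereal_sup [set f e | e in [set e | 0 < e < d]])).
    by apply: ereal_inf_lbound; exists d.
  by apply: ge_ereal_sup => _ [e de <-]; exact: fd.
apply: le_ereal_inf_tmp => _ [d /= d0 <-].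
apply: le_ereal_sup_tmp; exists (f (d / 2)); last by apply: f_ge0; lra.
by exists (d / 2) => //=; apply/andP; split; lra.
Qed.

Lemma limsup0_powR_eq0 (m : R -> \bar R) s K r :
  (forall e, (0 <= m e)%E) -> 0 <= K -> 1 - s < r ->
  (forall e, 0 < e <= 1 -> (m e <= (K * e `^ r)%:E)%E) ->
  limsup0 (fun e => (m e * ((e `^ (1 - s))^-1)%:E)%E) = 0%E.
Proof.
move=> m_ge0 K0 sr mK; apply: limsup0_eq0.
  by move=> e e0; rewrite mule_ge0 // lee_fin invr_ge0 powR_ge0.
move=> eps eps0; set tau := r - (1 - s).
have tau0 : 0 < tau by rewrite subr_gt0.
pose q := (eps / (K + 1)) `^ tau^-1.
have q0 : 0 < q by rewrite powR_gt0 // divr_gt0 //; lra.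
exists (Num.min 1 q); first by rewrite lt_min ltr01 q0.
move=> e /andP[e0]; rewrite lt_min => /andP[e1 eq].
have pe : 0 < e `^ (1 - s) by exact: powR_gt0.
apply: (le_trans (lee_wpmul2r _ (mK e _))); first by rewrite lee_fin invr_ge0 powR_ge0.
  by rewrite e0 ltW.
rewrite -EFinM.
have -> : K * e `^ r * (e `^ (1 - s))^-1 = K * e `^ tau.
  by rewrite /tau [in RHS]powRB ?gt_eqF ?implybT ?mulrA.
have etau : e `^ tau <= eps / (K + 1).
  have -> : eps / (K + 1) = q `^ tau.
    by rewrite -powRrM mulVf ?gt_eqF // powRr1 // divr_ge0 //; lra.
  by apply: ge0_ler_powR; rewrite ?nnegrE ?(ltW tau0) ?(ltW e0) ?(ltW q0) ?ltW.
rewrite lee_fin (le_trans (ler_wpM2l K0 etau)) // mulrA ler_pdivrMr; last lra.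
nra.
Qed.

End limsup0.

Section ereal_inf_EFin.
Variable R : realType.
Implicit Types S G : set R.

Lemma ereal_inf_EFin_le_rays S G : (forall g, G g -> forall s, g < s -> S s) ->
  (ereal_inf [set x%:E | x in S] <= ereal_inf [set x%:E | x in G])%E.
Proof.
move=> GS; apply: le_ereal_inf_tmp => _ [g Gg <-].
apply/lee_addgt0Pr => eps eps0; apply: ereal_inf_lbound.
by exists (g + eps); [apply: (GS g Gg); lra|rewrite EFinD].
Qed.

Lemma ereal_inf_EFin_eq_rays S G :
  (forall g, G g -> forall s, g < s -> S s) ->
  (forall s, S s -> forall g, s < g -> G g) ->
  ereal_inf [set x%:E | x in S] = ereal_inf [set x%:E | x in G].
Proof. by move=> GS SG; apply/eqP; rewrite eq_le !ereal_inf_EFin_le_rays. Qed.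

End ereal_inf_EFin.

Lemma geometric_eseries_lty {R : realType} (C r : R) : 0 <= r < 1 ->
  (\sum_(k <oo) (C * r ^+ k)%:E < +oo)%E.
Proof.
move=> /andP[r0 r1].
have cvg_r : cvgn (series (geometric C r)).
  by apply: is_cvg_geometric_series; rewrite ger0_norm.
suff -> : (\sum_(k <oo) (C * r ^+ k)%:E)%E = (limn (series (geometric C r)))%:E.
  exact: ltry.
rewrite -(EFin_lim cvg_r); congr (limn _); apply/funext => n /=.
by rewrite sumEFin.
Qed.

Section dyadic_summation.
Variables (R : realType) (c g : R).
Hypotheses (c_gt0 : 0 < c) (g_gt0 : 0 < g).

Let scale m := c * 2^-1 ^+ m.

Let scale_gt0 m : 0 < scale m.
Proof. by rewrite mulr_gt0 // exprn_gt0. Qed.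

Lemma exists_dyadic_scale x : 0 < x <= c ->
  exists m, scale m <= x < 2 * scale m.
Proof.
move=> /andP[x0 xc].
have scale_le : exists m, scale m <= x.
  have := archi_boundP (divr_ge0 (ltW c_gt0) (ltW x0)); set n := Num.bound _.
  move=> cxn; exists n; rewrite /scale exprVn ler_pdivrMr ?exprn_gt0 //.
  rewrite mulrC -ler_pdivrMr // (le_trans (ltW cxn)) //.
  by rewrite -natrX ler_nat ltnW // ltn_expl.
case: (ex_minnP scale_le) => m mx m_min; exists m; rewrite mx /=.
case: m mx m_min => [|m] mx m_min; first by move: mx; rewrite /scale expr0 mulr1; lra.
have : ~~ (scale m <= x) by apply/negP => /m_min; rewrite ltnn.
by rewrite -ltNge /scale exprS; congr (_ < _); field.
Qed.

Lemma powR_le_dyadic_series x : 0 <= x <= c ->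
  ((x `^ g)%:E <=
    \sum_(m <oo) (2 `^ g * scale m `^ (g - 1) * Num.min x (scale m))%:E)%E.
Proof.
move=> /andP[x0 xc].
have term_ge0 y m : 0 <= y ->
    (0 <= (2 `^ g * scale m `^ (g - 1) * Num.min y (scale m))%:E)%E.
  by move=> y0; rewrite lee_fin !mulr_ge0 ?powR_ge0 // le_min y0 ltW.
have [->|xn0] := eqVneq x 0.
  by rewrite powR0 ?gt_eqF //; apply: nneseries_ge0 => m _ _; exact: term_ge0.
have [m /andP[mx xm]] : exists m, scale m <= x < 2 * scale m.
  by apply: exists_dyadic_scale; rewrite lt_def xn0 x0.
(* The single term at the dyadic scale of [x] already dominates [x ^ g]. *)
rewrite (@nneseriesD1 _ _ m xpredT) //; last by move=> k _; exact: term_ge0.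
apply: le_trans (leeDl _ _); last by apply: nneseries_ge0 => k _ _; exact: term_ge0.
have sm0 := scale_gt0 m.
rewrite lee_fin (min_r mx).
have -> : 2 `^ g * scale m `^ (g - 1) * scale m = (2 * scale m) `^ g.
  rewrite powRM ?(ltW sm0) // -mulrA; congr (_ * _).
  rewrite -{2}(powRr1 (ltW sm0)) -powRD ?subrK //.
  by rewrite implybE (gt_eqF sm0) orbT.
by apply: ge0_ler_powR; rewrite ?nnegrE ?(ltW g_gt0) ?x0 ?ltW // mulr_gt0.
Qed.

Lemma eseries_powR_lty_of_min_sum (u : nat -> R) s K :
  (forall k, 0 <= u k <= c) -> s < g -> 0 <= K ->
  (forall e, 0 < e <= c ->
    (\sum_(k <oo) (Num.min (u k) e)%:E <= (K * e `^ (1 - s))%:E)%E) ->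
  (\sum_(k <oo) ((u k) `^ g)%:E < +oo)%E.
Proof.
move=> u_bnd sg K0 u_min.
pose T m k := (2 `^ g * scale m `^ (g - 1) * Num.min (u k) (scale m))%:E.
have min_ge0 m k : 0 <= Num.min (u k) (scale m).
  by case/andP: (u_bnd k) => uk0 _; rewrite le_min uk0 ltW.
have T_ge0 m k : (0 <= T m k)%E by rewrite lee_fin !mulr_ge0 ?powR_ge0.
pose rho := 2^-1 `^ (g - s) : R.
have rho_bnd : 0 <= rho < 1.
  by rewrite powR_ge0 powR_lt1 ?subr_gt0 //; apply/andP; split; lra.
apply: (le_lt_trans (lee_nneseries _ _)).
- by move=> k _ _; rewrite lee_fin powR_ge0.
- by move=> k _; exact: powR_le_dyadic_series (u_bnd k).
rewrite nneseries_interchange; last by move=> k m; exact: T_ge0.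
apply: (le_lt_trans _ (geometric_eseries_lty (2 `^ g * K * c `^ (g - s)) rho rho_bnd)).
apply: lee_nneseries => [m _ _|m _].
  by apply: nneseries_ge0 => k _ _; exact: T_ge0.
have sm0 := scale_gt0 m.
rewrite (eq_eseriesr (fun k _ => EFinM _ _)) nneseriesZl; last first.
  by move=> k _; rewrite lee_fin.
apply: le_trans (lee_wpmul2l _ (u_min _ _)) _.
- by rewrite lee_fin mulr_ge0 ?powR_ge0.
- by rewrite sm0 /scale ler_piMr ?(ltW c_gt0) // exprn_ile1 //; lra.
have scale_powR : scale m `^ (g - 1) * scale m `^ (1 - s) = c `^ (g - s) * rho ^+ m.
  rewrite -powRD; last by rewrite implybE (gt_eqF sm0) orbT.
  have half_ge0 : 0 <= 2^-1 :> R by lra.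
  rewrite powRM ?(ltW c_gt0) ?exprn_ge0 // powR_exprn //.
  by congr (c `^ _ * _ `^ _ ^+ _); ring.
rewrite -EFinM lee_fin le_eqVlt; apply/orP; left; apply/eqP.
transitivity (2 `^ g * K * (scale m `^ (g - 1) * scale m `^ (1 - s))); first ring.
by rewrite scale_powR mulrA.
Qed.

End dyadic_summation.

Section lebesgue_nbhd.
Variable R : realType.
Local Notation lambda := (@lebesgue_measure R).

Lemma lebesgue_measure_itv_le (b1 b2 : bool) (x y : R) : x <= y ->
  (lambda [set` Interval (BSide b1 x) (BSide b2 y)] <= (y - x)%:E)%E.
Proof.
move=> xy; rewrite lebesgue_measure_itv.
by case: ifP => _ //=; rewrite lee_fin subr_ge0.
Qed.

Lemma eps_nbhd_rangeE (b : nat -> R) e :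
  eps_nbhd (range b) e = \bigcup_k `](b k - e), (b k + e)[%classic.
Proof.
apply/seteqP; split => x.
  move=> [_ [k _ <-]]; rewrite ltr_norml => xbk; exists k => //=.
  by rewrite in_itv /=; apply/andP; split; lra.
move=> [k _]; rewrite /= in_itv /= => xbk; exists (b k); first by exists k.
by rewrite ltr_norml; lra.
Qed.

Lemma measurable_eps_nbhd_range (b : nat -> R) e :
  measurable (eps_nbhd (range b) e).
Proof.
by rewrite eps_nbhd_rangeE; apply: bigcup_measurable => k _; exact: measurable_itv.
Qed.

Definition gap (b : nat -> R) k := b k - b k.+1.

Section nonincreasing.
Variable b : nat -> R.
Hypothesis b_nonincr : forall k, b k.+1 <= b k.

Let b_le : {homo b : i j / (i <= j)%N >-> j <= i}.
Proof. exact/nonincreasing_seqP. Qed.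

Lemma gap_ge0 k : 0 <= gap b k.
Proof. by rewrite subr_ge0. Qed.

Lemma eps_nbhd_range_measure_ge e : 0 < e ->
  (\sum_(k <oo) (Num.min (gap b k) e)%:E <= lambda (eps_nbhd (range b) e))%E.
Proof.
move=> e0; pose D k : set (measurableTypeR R) :=
  `[b k.+1, (b k.+1 + Num.min (gap b k) e)[%classic.
have D_disj : trivIset setT D.
  suff D_disj_lt i j x : (i < j)%N -> D i x -> D j x -> False.
    move=> i j _ _ [x [Dix Djx]].
    by case: (ltngtP i j) => // ij; [case: (D_disj_lt i j x)|case: (D_disj_lt j i x)].
  move=> ij; rewrite /D /= !in_itv /= => /andP[? ?] /andP[? ?].
  by have := b_le _ _ ij; have := ge_min_l (gap b j) e; rewrite /gap; lra.
have D_sub : \bigcup_k D k `<=` eps_nbhd (range b) e.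
  rewrite eps_nbhd_rangeE => x [k _]; rewrite /D /= in_itv /= => /andP[? ?].
  by exists k.+1 => //; rewrite /= in_itv /=; have := ge_min_r (gap b k) e; lra.
have mD k : measurable (D k) by exact: measurable_itv.
have mUD : measurable (\bigcup_k D k) by exact: bigcup_measurable.
apply: (@le_trans _ _ (lambda (\bigcup_k D k))); last first.
  exact: le_measure (mem_set mUD) (mem_set (measurable_eps_nbhd_range b e)) D_sub.
rewrite measure_semi_bigcup //.
apply: lee_nneseries => [k _ _|k _]; first by rewrite lee_fin le_min gap_ge0 ltW.
have min_ge0 : 0 <= Num.min (gap b k) e by rewrite le_min gap_ge0 ltW.
rewrite /D /= (lebesgue_measure_itv (R:=R)) /= lte_fin.
by case: ltP => ?; rewrite -?EFinB lee_fin; lra.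
Qed.

Hypothesis b_ge0 : forall k, 0 <= b k.

Lemma eps_nbhd_range_measure_le e : 0 < e ->
  (lambda (eps_nbhd (range b) e) <= (b 0 + 2 * e)%:E)%E.
Proof.
move=> e0; pose I : set (measurableTypeR R) := `](- e), (b 0 + e)[%classic.
have sub : eps_nbhd (range b) e `<=` (I : set R).
  rewrite eps_nbhd_rangeE => x [k _]; rewrite /I /= !in_itv /= => /andP[? ?].
  have := b_le _ _ (leq0n k); have := b_ge0 k => ? ?; apply/andP; split; lra.
apply: (@le_trans _ _ (lambda I)).
  apply: le_measure; rewrite ?inE.
  - exact: measurable_eps_nbhd_range.
  - exact: measurable_itv.
  - exact: sub.
rewrite /I.
by apply: le_trans (lebesgue_measure_itv_le _ _ _ _ _) _;
  rewrite ?lee_fin; have := b_ge0 0; lra.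
Qed.

Hypothesis b_cvg0 : forall x, 0 < x -> exists n, b n < x.

Lemma exists_gap_index x : 0 < x < b 0 -> exists k, b k.+1 < x <= b k.
Proof.
move=> /andP[x0 xb0]; case: (ex_minnP (b_cvg0 x x0)) => -[|k] bkx k_min.
  by move: bkx; rewrite ltNge (ltW xb0).
by exists k; rewrite bkx leNgt /=; apply/negP => /k_min; rewrite ltnn.
Qed.

Lemma eps_nbhd_range_subset e :
  let h k := Num.min (gap b k) e in
  eps_nbhd (range b) e `<=`
    (`](- e), 0] `|` `[b 0, (b 0 + e)[)%classic `|`
    \bigcup_k (`[b k.+1, (b k.+1 + h k)] `|` `[(b k - h k), b k])%classic.
Proof.
move=> h; rewrite eps_nbhd_rangeE => x [j _]; rewrite /= in_itv /= => /andP[xj1 xj2].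
have := b_le _ _ (leq0n j); have := b_ge0 j => bj0 bj_le.
have [x_le0|x_gt0] := leP x 0.
  by left; left; rewrite /= in_itv /=; apply/andP; split; lra.
have [b0_le|x_lt] := leP (b 0) x.
  by left; right; rewrite /= in_itv /=; apply/andP; split; lra.
have [k /andP[bkx xbk]] : exists k, b k.+1 < x <= b k.
  by apply: exists_gap_index; rewrite x_gt0 x_lt.
right; exists k => //.
have [jk|kj] := leqP j k.
  have : b k - x <= h k.
    by have := b_le _ _ jk; rewrite /h le_min /gap => ?; apply/andP; split; lra.
  by right; rewrite /= in_itv /=; apply/andP; split; lra.
have : x - b k.+1 <= h k.
  by have := b_le _ _ kj; rewrite /h le_min /gap => ?; apply/andP; split; lra.
by left; rewrite /= in_itv /=; apply/andP; split; lra.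
Qed.

Lemma eps_nbhd_range_measure_le_gaps e : 0 < e ->
  (lambda (eps_nbhd (range b) e) <=
   (2 * e)%:E + \sum_(k <oo) (2 * Num.min (gap b k) e)%:E)%E.
Proof.
move=> e0; pose h k := Num.min (gap b k) e.
have h_ge0 k : 0 <= h k by rewrite le_min gap_ge0 ltW.
pose Z : set (measurableTypeR R) :=
  `](- e), 0]%classic `|` `[b 0, (b 0 + e)[%classic.
pose G k : set (measurableTypeR R) :=
  `[b k.+1, (b k.+1 + h k)]%classic `|` `[(b k - h k), b k]%classic.
have mZ : measurable Z by apply: measurableU; exact: measurable_itv.
have mG k : measurable (G k) by apply: measurableU; exact: measurable_itv.
have mUG : measurable (\bigcup_k G k) by exact: bigcup_measurable.
apply: (@le_trans _ _ (lambda (Z `|` \bigcup_k G k))).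
  apply: le_measure; rewrite ?inE.
  - exact: measurable_eps_nbhd_range.
  - exact: measurableU.
  - exact: eps_nbhd_range_subset.
apply: le_trans (measureU2 _ mZ mUG) _; apply: leeD.
  apply: le_trans (measureU2 _ _ _) _; try exact: measurable_itv.
  have -> : (2 * e)%:E = (e%:E + e%:E)%E by rewrite -EFinD; congr EFin; lra.
  by apply: leeD; apply: le_trans (lebesgue_measure_itv_le _ _ _ _ _) _;
    rewrite ?lee_fin; have := b_ge0 0; lra.
apply: (le_trans (measure_sigma_subadditive _ mG mUG _)); first exact: subset_refl.
apply: lee_nneseries => [k _ _|k _]; first exact: measure_ge0.
apply: le_trans (measureU2 _ _ _) _; try exact: measurable_itv.
have -> : (2 * h k)%:E = ((h k)%:E + (h k)%:E)%E by rewrite -EFinD; congr EFin; lra.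
by apply: leeD; apply: le_trans (lebesgue_measure_itv_le _ _ _ _ _) _;
  rewrite ?lee_fin; have := h_ge0 k; lra.
Qed.

Lemma limsup0_eps_nbhd_range_eq0 g s : 0 < g -> g < s ->
  (\sum_(k <oo) ((gap b k) `^ g)%:E < +oo)%E ->
  limsup0 (fun e => (lambda (eps_nbhd (range b) e) * ((e `^ (1 - s))^-1)%:E)%E)
    = 0%E.
Proof.
move=> g0 gs gap_lty.
have [g1|g1] := leP g 1; last first.
  apply: (@limsup0_powR_eq0 _ _ _ (b 0 + 2) 0).
  - by move=> e; exact: measure_ge0.
  - by have := b_ge0 0; lra.
  - by lra.
  move=> e /andP[e0 e1]; rewrite powRr0 mulr1.
  by apply: le_trans (eps_nbhd_range_measure_le _ e0) _; rewrite lee_fin; lra.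
set C := (\sum_(k <oo) _)%E in gap_lty.
have C_ge0 : (0 <= C)%E by apply: nneseries_ge0 => k _ _; rewrite lee_fin powR_ge0.
have C_fin : C \is a fin_num by rewrite ge0_fin_numE.
apply: (@limsup0_powR_eq0 _ _ _ (2 + 2 * fine C) (1 - g)).
- by move=> e; exact: measure_ge0.
- by have := fine_ge0 C_ge0; lra.
- by lra.
move=> e /andP[e0 e1]; apply: le_trans (eps_nbhd_range_measure_le_gaps _ e0) _.
have pe : 0 <= e `^ (1 - g) by exact: powR_ge0.
have min_le k : ((2 * Num.min (gap b k) e)%:E <=
    (2 * e `^ (1 - g))%:E * ((gap b k) `^ g)%:E)%E.
  rewrite -EFinM lee_fin -mulrA ler_pM2l //.
  by apply: ge_min_powR; rewrite ?gap_ge0 ?g0.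
apply: le_trans (leeD (lexx _) (lee_nneseries _ (fun k _ => min_le k))) _.
  by move=> k _ _; rewrite lee_fin mulr_ge0 // le_min gap_ge0 ltW.
rewrite nneseriesZl; last by move=> k _; rewrite lee_fin powR_ge0.
rewrite -/C -(fineK C_fin) -EFinM -EFinD lee_fin.
have e_le : e <= e `^ (1 - g) by apply: ger1_powR; rewrite ?e0 //; lra.
have := fine_ge0 C_ge0; nra.
Qed.

Lemma eseries_gap_powR_lty s g : 0 <= s -> s < g ->
  limsup0 (fun e => (lambda (eps_nbhd (range b) e) * ((e `^ (1 - s))^-1)%:E)%E)
    = 0%E ->
  (\sum_(k <oo) ((gap b k) `^ g)%:E < +oo)%E.
Proof.
move=> s0 sg box0; have g0 : 0 < g by lra.
(* Any [c >= b 0] bounds the gaps; the [+ 1] keeps [c > 0] even if [b] vanishes. *)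
pose c := b 0 + 1; have c0 : 0 < c by have := b_ge0 0; rewrite /c; lra.
have gap_le k : 0 <= gap b k <= c.
  rewrite gap_ge0 /=; have := b_le _ _ (leq0n k); have := b_ge0 k.+1.
  by rewrite /gap /c; lra.
pose M := b 0 + 2 * c.
have M0 : 0 <= M by have := b_ge0 0; rewrite /M; lra.
have measure_le_M e : 0 < e <= c -> (lambda (eps_nbhd (range b) e) <= M%:E)%E.
  move=> /andP[e0 ec]; apply: le_trans (eps_nbhd_range_measure_le _ e0) _.
  by rewrite lee_fin /M; lra.
(* For [s >= 1] the boundedness of [B_e] alone is an [O(e^0)] bound. *)
have [s1|s1] := ltP s 1; last first.
  apply: (@eseries_powR_lty_of_min_sum _ c g c0 g0 _ 1 M gap_le _ M0); first lra.
  move=> e /andP[e0 ec]; apply: le_trans (eps_nbhd_range_measure_ge _ e0) _.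
  by rewrite subrr powRr0 mulr1; apply: measure_le_M; rewrite e0.
have [d d0 box_lt1] := @limsup0_lt _ _ 1 box0 ltr01.
have pd : 0 < d `^ (1 - s) by exact: powR_gt0.
have Md0 : 0 <= M / d `^ (1 - s) by rewrite divr_ge0 // ltW.
apply: (@eseries_powR_lty_of_min_sum _ c g c0 g0 _ s (1 + M / d `^ (1 - s)) gap_le sg).
  by lra.
move=> e /andP[e0 ec]; apply: le_trans (eps_nbhd_range_measure_ge _ e0) _.
have pe : 0 < e `^ (1 - s) by exact: powR_gt0.
have [ed|de] := ltP e d.
  apply: (@le_trans _ _ (e `^ (1 - s))%:E).
    have := box_lt1 e; rewrite e0 ed => /(_ isT) /ltW.
    by rewrite lee_pdivrMr // mul1e.
  by rewrite lee_fin; nra.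
apply: le_trans (measure_le_M e _) _; first by rewrite e0.
have : d `^ (1 - s) <= e `^ (1 - s).
  by apply: ge0_ler_powR; rewrite ?nnegrE; lra.
rewrite lee_fin mulrDl mul1r => de_pow.
have : M <= M / d `^ (1 - s) * e `^ (1 - s).
  by rewrite mulrAC ler_pdivlMr // ler_wpM2l.
lra.
Qed.

Lemma upper_box_dim_range_gap : upper_box_dim (range b) = seq_box_dim (gap b).
Proof.
apply: ereal_inf_EFin_eq_rays.
- move=> g [g0 gap_lty] s gs; split; first lra.
  exact: limsup0_eps_nbhd_range_eq0 gap_lty.
- move=> s [s0 box0] g sg; split; first lra.
  exact: eseries_gap_powR_lty box0.
Qed.

End nonincreasing.
End lebesgue_nbhd.

Lemma inv_gap_le_ratio (R : realFieldType) (x y z : R) :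
  0 < x -> 0 < y -> 0 < z ->
  (y^-1 - z^-1 <= x^-1 - y^-1) = (2 <= y / x + y / z).
Proof.
move=> x0 y0 z0; have yV0 : 0 < y^-1 by rewrite invr_gt0.
rewrite -[RHS](ler_pM2r yV0).
have -> : (y / x + y / z) * y^-1 = x^-1 + z^-1 by field; rewrite !gt_eqF.
by apply/idP/idP => ?; lra.
Qed.

Lemma PhiE (R : realType) (x : R) : x != 0 -> Phi x = x^-1.
Proof.
by move=> x0; rewrite /Phi real_normK ?num_real // expr2 invfM mulrA divff ?mul1r.
Qed.

Lemma image_Phi_range (R : realType) (a : nat -> R) : (forall k, a k != 0) ->
  Phi @` range a = range (fun k => (a k)^-1).
Proof.
move=> a0; apply/seteqP; split => x.
  by move=> [_ [k _ <-] <-]; exists k => //; rewrite PhiE.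
by move=> [k _ <-]; exists (a k); [exists k | rewrite PhiE].
Qed.

Theorem lemma2p12 (R : realType) (a : nat -> R) :
  (forall k, 0 < a k) ->
  (forall k, a k <= a k.+1) ->
  (forall M : R, exists k, M < a k) ->
  let mu := fun k => (a k)^-1 - (a k.+1)^-1 in
  ((forall k, mu k.+1 <= mu k) <->
   (forall k, 2 <= a k.+1 / a k + a k.+1 / a k.+2)) /\
  upper_box_dim_inv (range a) = seq_box_dim mu.
Proof.
move=> a_gt0 a_nondecr a_unbnd mu; split.
  have mu_le k : (mu k.+1 <= mu k) = (2 <= a k.+1 / a k + a k.+1 / a k.+2).
    exact: inv_gap_le_ratio.
  by split=> mu_nonincr k; [rewrite -mu_le | rewrite mu_le].
pose b k := (a k)^-1.
have b_nonincr k : b k.+1 <= b k by rewrite lef_pV2 ?posrE.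
have b_ge0 k : 0 <= b k by rewrite invr_ge0 ltW.
have b_cvg0 x : 0 < x -> exists n, b n < x.
  move=> x0; have [n xn] := a_unbnd x^-1; exists n.
  by rewrite -[x]invrK ltf_pV2 ?posrE ?invr_gt0.
rewrite /upper_box_dim_inv image_Phi_range => [|k]; last by rewrite gt_eqF.
exact: upper_box_dim_range_gap b_nonincr b_ge0 b_cvg0.
Qed.
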